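(* There is a constant $c>0$ such that the following holds for all $n\ge 2$. Let $q,t_1,\dots,t_n$ be $n+1$ distinct qubits, and for each $i$ let $D_i$ be an arbitrary diagonal two-qubit unitary gate acting on the pair $(q,t_i)$. Then the operator $D_nD_{n-1}\cdots D_1$ can be embedded, using at most $cn$ ancillae, in a quantum circuit of depth at most $c\log n$.
   Context: Qubits have computational basis $|0\rangle,|1\rangle$. A diagonal two-qubit gate is a unitary of the form $\mathrm{diag}(e^{i\theta_{00}},e^{i\theta_{01}},e^{i\theta_{10}},e^{i\theta_{11}})$ in the computational basis. A one-layer circuit is a tensor product of arbitrary one-qubit and two-qubit unitary gates acting on pairwise disjoint sets of qubits; a circuit of depth $k$ is a product of $k$ one-layer circuits. An operator $F$ on $n'$ qubits is embedded in an operator $M$ on $n'+m$ qubits using $m$ ancillae if $M(|\psi\rangle\otimes|0\cdots0\rangle)=(F|\psi\rangle)\otimes|0\cdots0\rangle$ for all $|\psi\rangle$, where the last $m$ qubits are the ancillae. *)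

From Stdlib Require Import Reals.
From HB Require Import structures.
From mathcomp Require Import all_boot all_order all_algebra.
From mathcomp Require Import Rstruct complex.
Set Implicit Arguments. Unset Strict Implicit. Unset Printing Implicit Defensive.
Import Order.TTheory GRing.Theory Num.Theory.
Local Open Scope ring_scope.

Definition C := complex R.

Definition expi (a : R) : C := Complex (cos a) (sin a).

Definition basis (N : nat) := {ffun 'I_N -> bool}.
(* operators on N qubits, given by their matrix entries <x|A|y> *)
Definition op (N : nat) := basis N -> basis N -> C.
Definition vec (N : nat) := basis N -> C.

Definition opmul N (A B : op N) : op N :=
  fun x y => \sum_(z : basis N) A x z * B z y.
Definition opid N : op N := fun x y => (x == y)%:R.
Definition opapp N (A : op N) (v : vec N) : vec N :=
  fun x => \sum_(y : basis N) A x y * v y.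

Definition unitary n (U : 'M[C]_n) : Prop :=
  U *m (map_mx (@conjc _) U)^T = 1%:M.

Definition b2I (b : bool) : 'I_2 := inord (nat_of_bool b).
Definition idx2 (a b : bool) : 'I_4 := inord (2 * nat_of_bool a + nat_of_bool b).

(* A one-layer circuit on N qubits: the qubits are partitioned into blocks
   {i, pair i} (pair is an involution); a block with pair i = i carries a
   one-qubit unitary one i, a block {i, pair i} with i < pair i carries a
   two-qubit unitary two i acting on (qubit i, qubit (pair i)). *)
Record layer (N : nat) := Layer {
  pair : 'I_N -> 'I_N;
  one : 'I_N -> 'M[C]_2;
  two : 'I_N -> 'M[C]_4 }.

Definition layer_ok N (L : layer N) : Prop :=
  (forall i : 'I_N, pair L (pair L i) = i) /\
  (forall i : 'I_N, pair L i = i -> unitary (one L i)) /\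
  (forall i : 'I_N, (i < pair L i)%N -> unitary (two L i)).

Definition layer_op N (L : layer N) : op N := fun x y =>
  (\prod_(i : 'I_N | pair L i == i) one L i (b2I (x i)) (b2I (y i))) *
  (\prod_(i : 'I_N | (i < pair L i)%N)
      two L i (idx2 (x i) (x (pair L i))) (idx2 (y i) (y (pair L i)))).

Fixpoint layers_ok N (ls : seq (layer N)) : Prop :=
  match ls with
  | [::] => True
  | L :: ls' => layer_ok L /\ layers_ok ls'
  end.

Definition depth_circuit N (k : nat) (M : op N) : Prop :=
  exists ls : seq (layer N),
    size ls = k /\ layers_ok ls /\ M = foldr (@opmul N) (@opid N) (map (@layer_op N) ls).

(* Embedding with m ancillae (the last m qubits) *)
Definition main_part n m (x : basis (n + m)) : basis n := [ffun i => x (lshift m i)].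
Definition anc_part n m (x : basis (n + m)) : basis m := [ffun j => x (rshift n j)].
Definition tensor0 n m (v : vec n) : vec (n + m) := fun x =>
  if anc_part x == [ffun _ => false] then v (main_part x) else 0.

Definition embeds n m (F : op n) (M : op (n + m)) : Prop :=
  forall v : vec n, forall x, opapp M (@tensor0 n m v) x = @tensor0 n m (opapp F v) x.

Definition diag_gate (th : 'I_4 -> R) : 'M[C]_4 := diag_mx (\row_k expi (th k)).

Definition two_qubit_on N (a b : 'I_N) (G : 'M[C]_4) : op N := fun x y =>
  G (idx2 (x a) (x b)) (idx2 (y a) (y b)) *
  \prod_(k : 'I_N | (k != a) && (k != b)) (x k == y k)%:R.

(* A product of diagonal gates is diagonal: D_n ... D_1 multiplies |x> by the
   phase prod_i exp(i theta_i(x_q, x_(t_i))).  With n ancillae, a CNOT fan-out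
   tree copies x_q onto every ancilla in 1 + ceil(log2 n) layers (one copy, then
   the number of copies doubles with each layer); a single layer then applies
   each D_i to the pair (t_i, ancilla i), and the fan-out is undone in reverse
   order.  Every gate used is monomial (a phase times a permutation of basis
   states), so the whole circuit is again monomial: its permutation is the
   identity because each CNOT layer is an involution, and on states with clean
   ancillae its phase is exactly that of D_n ... D_1. *)

From Pilot Require Import Defs.
From Stdlib Require Import Reals Lra.
From mathcomp Require Import all_boot all_order all_algebra.
From mathcomp Require Import Rstruct complex zify.
Set Implicit Arguments. Unset Strict Implicit. Unset Printing Implicit Defensive.
Import GRing.Theory.

Local Open Scope ring_scope.

Definition fst2 (c : 'I_4) : bool := (2 <= c)%N.
Definition snd2 (c : 'I_4) : bool := odd c.

Lemma idx2_val a b : (idx2 a b : nat) = (2 * a + b)%N.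
Proof. by rewrite /idx2 inordK //; case: a; case: b. Qed.

Lemma fst2_idx2 a b : fst2 (idx2 a b) = a.
Proof. by rewrite /fst2 idx2_val; case: a; case: b. Qed.

Lemma snd2_idx2 a b : snd2 (idx2 a b) = b.
Proof. by rewrite /snd2 idx2_val; case: a; case: b. Qed.

Lemma idx2_fst2_snd2 c : idx2 (fst2 c) (snd2 c) = c.
Proof. by apply: val_inj => /=; rewrite idx2_val; case: c => [[|[|[|[|k]]]] hk]. Qed.

Lemma b2I_inj : injective b2I.
Proof. by move=> [] [] /(congr1 val) /=; rewrite /b2I ?inordK. Qed.

Lemma prod_nat_bool (I : finType) (P B : pred I) :
  \prod_(i | P i) ((B i)%:R : Defs.C) = [forall (i | P i), B i]%:R.
Proof.
rewrite -big_andE.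
by apply: (big_rec2 (fun (a : Defs.C) (b : bool) => a = b%:R)) => // i a b _ ->; rewrite -natrM mulnb.
Qed.

Lemma mul_expi_conjc a : expi a * conjc (expi a) = 1.
Proof.
rewrite /expi /=; have := sin2_cos2 a; rewrite /Rsqr => h.
by congr Complex; rewrite mulrN ?opprK; [rewrite addrC; exact: h|rewrite [sin a * _]mulrC addNr].
Qed.

Definition monomial N (ph : basis N -> Defs.C) (f : basis N -> basis N) : op N :=
  fun x y => ph x * (y == f x)%:R.

Lemma opid_monomial N : @opid N =2 monomial (fun=> 1) id.
Proof. by move=> x y; rewrite /opid /monomial mul1r eq_sym. Qed.

Lemma opapp_monomial N ph f (v : vec N) x :
  opapp (monomial ph f) v x = ph x * v (f x).
Proof.
rewrite /opapp (bigD1 (f x)) //= /monomial eqxx mulr1 big1 ?addr0 // => y /negbTE ->.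
by rewrite mulr0 mul0r.
Qed.

Lemma opmul_monomial N (A B : op N) ph f ps g :
  A =2 monomial ph f -> B =2 monomial ps g ->
  opmul A B =2 monomial (fun x => ph x * ps (f x)) (g \o f).
Proof.
move=> eA eB x y; rewrite /opmul.
under eq_bigr => z _ do rewrite eA eB.
by have := opapp_monomial ph f (monomial ps g ^~ y) x; rewrite /opapp => ->; rewrite /monomial mulrA.
Qed.

Lemma eq_opapp N (A B : op N) v : A =2 B -> opapp A v =1 opapp B v.
Proof. by move=> eAB x; apply: eq_bigr => y _; rewrite eAB. Qed.

Lemma big_opmul_diagonal N (I : Type) (r : seq I) (G : I -> op N) ph :
  (forall i, G i =2 monomial (ph i) id) ->
  \big[@opmul N/@opid N]_(i <- r) G i =2 monomial (fun x => \prod_(i <- r) ph i x) id.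
Proof.
move=> eG; elim: r => [|i r IH] x y; first by rewrite big_nil opid_monomial /monomial big_nil.
by rewrite big_cons (opmul_monomial (eG i) IH) /monomial big_cons.
Qed.

Lemma two_qubit_on_diag N (a b : 'I_N) th : a != b ->
  two_qubit_on a b (diag_gate th) =2 monomial (fun x => expi (th (idx2 (x a) (x b)))) id.
Proof.
move=> neq_ab x y; rewrite /two_qubit_on /diag_gate /monomial !mxE.
rewrite -[expi _ *+ _]mulr_natr -mulrA (prod_nat_bool (fun k => (k != a) && (k != b))) -natrM mulnb.
congr (_ * (nat_of_bool _)%:R); apply/idP/eqP => [/andP[/eqP e /forallP same]|->].
  apply/ffunP => k; case: (eqVneq k a) => [->|ka]; first by have := congr1 fst2 e; rewrite !fst2_idx2.
  case: (eqVneq k b) => [->|kb]; first by have := congr1 snd2 e; rewrite !snd2_idx2.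
  by have := same k; rewrite ka kb => /eqP.
by rewrite eqxx; apply/forallP => k; apply/implyP.
Qed.

Lemma embeds_diagonal n m (F : op n) (M : op (n + m)) phF phM :
  F =2 monomial phF id -> M =2 monomial phM id ->
  (forall x, anc_part x = [ffun=> false] -> phM x = phF (main_part x)) ->
  embeds F M.
Proof.
move=> eF eM ePh v x; rewrite (eq_opapp _ eM) opapp_monomial /tensor0.
case: eqP => [/ePh ->|_]; last by rewrite mulr0.
by rewrite (eq_opapp _ eF) opapp_monomial.
Qed.

Definition monomial_mx (ph : 'I_4 -> Defs.C) (sg : 'I_4 -> 'I_4) : 'M[Defs.C]_4 :=
  \matrix_(c, d) (ph c * (d == sg c)%:R).

Lemma monomial_mx_unitary ph sg :
  injective sg -> (forall c, ph c * conjc (ph c) = 1) -> unitary (monomial_mx ph sg).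
Proof.
move=> sg_inj ph_unit; apply/matrixP => i j; rewrite !mxE.
under eq_bigr => k _ do rewrite !mxE rmorphM /= conjc_nat.
rewrite (bigD1 (sg i)) //= eqxx big1 ?addr0 => [|k /negbTE->]; last by rewrite mulr0 mul0r.
case: (eqVneq i j) => [->|neq_ij]; first by rewrite eqxx !mulr1 ph_unit.
by rewrite (inj_eq sg_inj) (negbTE neq_ij) !mulr0.
Qed.

Lemma unitary1 n : unitary (1%:M : 'M[Defs.C]_n).
Proof. by rewrite /unitary map_mx1 trmx1 mulmx1. Qed.

Record mlayer N := MLayer {
  mpair : 'I_N -> 'I_N;
  mpairK : involutive mpair;
  mphase : 'I_N -> 'I_4 -> Defs.C;
  mphase_unit : forall i c, mphase i c * conjc (mphase i c) = 1;
  mperm : 'I_N -> 'I_4 -> 'I_4;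
  mperm_inj : forall i, injective (mperm i) }.

Section MonomialLayer.
Variables (N : nat) (l : mlayer N).
Local Notation p := (mpair l).

Definition layer_of : layer N :=
  Layer p (fun=> 1%:M) (fun i => monomial_mx (mphase l i) (mperm l i)).

Lemma layer_of_ok : layer_ok layer_of.
Proof.
split; first exact: mpairK.
by split=> i _ /=; [exact: unitary1|apply: monomial_mx_unitary; [exact: mperm_inj|exact: mphase_unit]].
Qed.

Definition mlayer_phase (x : basis N) : Defs.C :=
  \prod_(i : 'I_N | (i < p i)%N) mphase l i (idx2 (x i) (x (p i))).

Definition mlayer_map (x : basis N) : basis N := [ffun k : 'I_N =>
  if (k < p k)%N then fst2 (mperm l k (idx2 (x k) (x (p k))))
  else if (p k < k)%N then snd2 (mperm l (p k) (idx2 (x (p k)) (x k)))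
  else x k].

Lemma layer_of_monomial : layer_op layer_of =2 monomial mlayer_phase mlayer_map.
Proof.
move=> x y; rewrite /layer_op /monomial /mlayer_phase /=.
under eq_bigr => i _ do rewrite mxE.
under [X in _ * X]eq_bigr => i _ do rewrite mxE.
rewrite big_split /= mulrCA; congr (_ * _).
rewrite (prod_nat_bool (fun i => p i == i)) prod_nat_bool -natrM mulnb.
congr (nat_of_bool _)%:R; apply/idP/eqP => [/andP[/forallP fixed /forallP paired]|->].
  apply/ffunP => k; rewrite ffunE; case: ltngtP => [lt_kp|lt_pk|eq_pk].
  - by have := paired k; rewrite lt_kp => /eqP <-; rewrite fst2_idx2.
  - by have := paired (p k); rewrite mpairK lt_pk => /eqP <-; rewrite snd2_idx2.
  - have := fixed k; have -> : p k == k by apply/eqP/val_inj.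
    by move=> /eqP /b2I_inj.
apply/andP; split; apply/forallP => i; apply/implyP => hi; rewrite !ffunE.
  by rewrite (eqP hi) ltnn.
by rewrite hi mpairK ltnNge (ltnW hi) /= hi idx2_fst2_snd2.
Qed.

End MonomialLayer.

Section Circuits.
Variable N : nat.
Implicit Types (L : seq (mlayer N)) (x : basis N).

Definition circuit L : op N :=
  foldr (@opmul N) (@opid N) (map (@layer_op N) (map (@layer_of N) L)).

Lemma depth_circuit_size L : depth_circuit (size L) (circuit L).
Proof.
exists (map (@layer_of N) L); rewrite size_map; do 2!split=> //.
by elim: L => //= l L IH; split; first exact: layer_of_ok.
Qed.

Definition circuit_map L x : basis N := foldl (fun y l => mlayer_map l y) x L.

Fixpoint circuit_phase L x : Defs.C :=
  if L is l :: L' then mlayer_phase l x * circuit_phase L' (mlayer_map l x) else 1.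

Lemma circuit_monomial L : circuit L =2 monomial (circuit_phase L) (circuit_map L).
Proof.
elim: L => [|l L IH]; first exact: opid_monomial.
exact: opmul_monomial (layer_of_monomial l) IH.
Qed.

Lemma circuit_phase_cat L1 L2 x :
  circuit_phase (L1 ++ L2) x = circuit_phase L1 x * circuit_phase L2 (circuit_map L1 x).
Proof. by elim: L1 x => [|l L1 IH] x /=; rewrite ?mul1r // IH mulrA. Qed.

End Circuits.

Definition cnot2 (c : 'I_4) : 'I_4 := idx2 (fst2 c) (fst2 c (+) snd2 c).

Lemma cnot2K : involutive cnot2.
Proof. by move=> c; rewrite /cnot2 fst2_idx2 snd2_idx2 addKb idx2_fst2_snd2. Qed.

Definition involution N := {p : 'I_N -> 'I_N | involutive p}.

Definition cnot_layer N (p : involution N) : mlayer N :=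
  @MLayer N (sval p) (svalP p) (fun _ _ => 1) (fun _ _ => ltac:(by rewrite conjc1 mulr1))
    (fun _ => cnot2) (fun _ => can_inj cnot2K).

Definition cnot_map N (p : 'I_N -> 'I_N) (x : basis N) : basis N :=
  [ffun k => if (p k < k)%N then x k (+) x (p k) else x k].

Section CnotLayers.
Variable N : nat.
Implicit Types (p : involution N) (ps : seq (involution N)) (x : basis N).

Lemma cnot_layer_map p x : mlayer_map (cnot_layer p) x = cnot_map (sval p) x.
Proof.
apply/ffunP => k; rewrite !ffunE /=.
by case: ltngtP => _; rewrite /cnot2 ?fst2_idx2 ?snd2_idx2 // addbC.
Qed.

Lemma cnot_layer_phase p x : mlayer_phase (cnot_layer p) x = 1.
Proof. exact: big1. Qed.

Lemma cnot_mapK p : involutive (cnot_map (sval p)).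
Proof.
move=> x; apply/ffunP => k; rewrite !ffunE.
case: ltnP => // lt_pk; by rewrite (svalP p) ltnNge (ltnW lt_pk) /= addbK.
Qed.

Lemma circuit_phase_cnot ps x : circuit_phase (map (@cnot_layer N) ps) x = 1.
Proof. by elim: ps x => //= p ps IH x; rewrite IH cnot_layer_phase mulr1. Qed.

Lemma circuit_map_cnot_rev ps x :
  circuit_map (map (@cnot_layer N) (rev ps)) (circuit_map (map (@cnot_layer N) ps) x) = x.
Proof.
elim: ps x => //= p ps IH x.
rewrite rev_cons map_rcons /circuit_map foldl_rcons -/(circuit_map _ _) IH.
by rewrite !cnot_layer_map cnot_mapK.
Qed.

End CnotLayers.

Local Close Scope ring_scope.

(* Out-of-range values [f k >= N] are replaced by [k], so the last doubling
   layer of the fan-out is truncated to the available ancillae. *)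
Definition ord_fun N (f : nat -> nat) (k : 'I_N) : 'I_N := insubd k (f k).

Lemma ord_fun_val N f (k : 'I_N) : ord_fun f k = (if f k < N then f k else k) :> nat.
Proof. exact: val_insubd. Qed.

Lemma ord_funK N f : involutive f -> involutive (@ord_fun N f).
Proof.
move=> fK k; apply: val_inj => /=; rewrite !ord_fun_val.
by case: (ltnP (f k) N) => hk; rewrite ?hk ?fK ?ltn_ord // ltnNge hk.
Qed.

Definition transp (a b k : nat) : nat := if k == a then b else if k == b then a else k.

Lemma transpK a b : involutive (transp a b).
Proof. by move=> k; rewrite /transp; do ! case: eqP => //=; lia. Qed.

Definition block_swap (A e k : nat) : nat :=
  if A <= k < A + e then k + e else if A + e <= k < A + e.*2 then k - e else k.

Lemma block_swapK A e : involutive (block_swap A e).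
Proof. by move=> k; rewrite /block_swap; do ! case: ifP; lia. Qed.

Lemma anc_part0E n m (x : basis (n + m)) (k : 'I_(n + m)) :
  anc_part x = [ffun=> false] -> n <= k -> x k = false.
Proof.
move=> x_anc le_nk; have lt_km : k - n < m by have := ltn_ord k; lia.
have := congr1 (fun a : basis m => a (Ordinal lt_km)) x_anc; rewrite !ffunE.
by have -> : rshift n (Ordinal lt_km) = k by apply: val_inj => /=; lia.
Qed.

Section Fanout.
Variables (n m : nat) (q : 'I_n.+1).
Local Notation N := (n.+1 + m).
Implicit Type x : basis N.

Definition fanout_state r x : basis N := [ffun k : 'I_N =>
  if k < n.+1 then x k else if k < n.+1 + 2 ^ r then x (lshift m q) else false].

Definition copy_involution : involution N := exist _ _ (@ord_funK N _ (transpK q n.+1)).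

Definition double_involution r : involution N :=
  exist _ _ (@ord_funK N _ (block_swapK n.+1 (2 ^ r))).

Definition fanout r : seq (involution N) := copy_involution :: map double_involution (iota 0 r).

Lemma cnot_copy x : anc_part x = [ffun=> false] ->
  cnot_map (sval copy_involution) x = fanout_state 0 x.
Proof.
move=> x_anc; apply/ffunP => k; rewrite !ffunE /= expn0 (ord_fun_val (transp q n.+1) k).
have anc0 := anc_part0E x_anc.
have := ltn_ord q; rewrite /transp.
case: (ltnP k n.+1) => [lt_kn|le_nk] ltq; first by do ! case: ifP; lia.
case: (eqVneq (k : nat) n.+1) => [ek|nek]; last by rewrite anc0 //; do ! case: ifP; lia.
have -> : ord_fun (transp q n.+1) k = lshift m q.
  by apply: val_inj => /=; rewrite ord_fun_val /transp ek; do ! case: ifP; lia.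
by rewrite anc0 ?ek //; do ! case: ifP => //=; lia.
Qed.

Lemma cnot_double r x :
  cnot_map (sval (double_involution r)) (fanout_state r x) = fanout_state r.+1 x.
Proof.
apply/ffunP => k; rewrite !ffunE /= !ord_fun_val expnS /block_swap.
have := ltn_ord k; have : 0 < 2 ^ r by rewrite expn_gt0.
by move: (2 ^ r) => e e_gt0 lt_kN; do ! case: ifP => //=; lia.
Qed.

Lemma fanout_map r x : anc_part x = [ffun=> false] ->
  circuit_map (map (@cnot_layer N) (fanout r)) x = fanout_state r x.
Proof.
move=> x_anc; elim: r => [|r IH]; first by rewrite /= cnot_layer_map cnot_copy.
rewrite /fanout; have -> : iota 0 r.+1 = rcons (iota 0 r) r by rewrite -cats1 -addn1 iotaD.
rewrite map_rcons -rcons_cons map_rcons /circuit_map foldl_rcons -/(circuit_map _ _).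
by rewrite IH cnot_layer_map cnot_double.
Qed.

End Fanout.

Local Open Scope ring_scope.

Lemma pick_inj (I : finType) (T : eqType) (h : I -> T) :
  injective h -> forall i, [pick j | h j == h i] = Some i.
Proof. by move=> h_inj i; case: pickP => [j /eqP/h_inj -> //|/(_ i)]; rewrite eqxx. Qed.

Section SwapImages.
Variables (I : finType) (T : eqType) (f g : I -> T).
Hypotheses (f_inj : injective f) (g_inj : injective g) (fg_neq : forall i j, f i != g j).

Definition swap_images (k : T) : T :=
  if [pick i | f i == k] is Some i then g i
  else if [pick i | g i == k] is Some i then f i else k.

Lemma swap_images_f i : swap_images (f i) = g i.
Proof. by rewrite /swap_images pick_inj. Qed.

Lemma swap_images_g i : swap_images (g i) = f i.
Proof.
rewrite /swap_images pick_inj //.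
by case: pickP => // j; rewrite (negbTE (fg_neq j i)).
Qed.

Lemma swap_images_out k :
  (forall i, f i != k) -> (forall i, g i != k) -> swap_images k = k.
Proof.
move=> f_out g_out; rewrite /swap_images.
case: pickP => [i|_]; first by rewrite (negbTE (f_out i)).
by case: pickP => [i|_] //; rewrite (negbTE (g_out i)).
Qed.

Lemma swap_imagesK : involutive swap_images.
Proof.
move=> k; case: (pickP (fun i => f i == k)) => [i /eqP <-|f_out].
  by rewrite swap_images_f swap_images_g.
case: (pickP (fun i => g i == k)) => [i /eqP <-|g_out].
  by rewrite swap_images_g swap_images_f.
by rewrite !swap_images_out // => i; rewrite ?f_out ?g_out.
Qed.

End SwapImages.

Definition swap2 (c : 'I_4) : 'I_4 := idx2 (snd2 c) (fst2 c).

Section DiagonalLayer.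
Variables (n : nat) (t : 'I_n -> 'I_n.+1) (theta : 'I_n -> 'I_4 -> R).
Hypothesis t_inj : injective t.
Local Notation N := (n.+1 + n).

Definition target (j : 'I_n) : 'I_N := lshift n (t j).
Definition ancilla (j : 'I_n) : 'I_N := rshift n.+1 j.

Lemma target_inj : injective target.
Proof. by move=> j j' /lshift_inj /t_inj. Qed.

Lemma target_lt_ancilla j j' : (target j < ancilla j')%N.
Proof. by rewrite /= (leq_trans (ltn_ord (t j))) ?leq_addr. Qed.

Lemma target_neq_ancilla j j' : target j != ancilla j'.
Proof. by rewrite -val_eqE /= ltn_eqF // target_lt_ancilla. Qed.

Local Notation diag_pair := (swap_images target ancilla).

(* The gate on the pair (target j, ancilla j) sees the bit of [target j] first,
   whereas [theta j] expects the copy of the control bit first. *)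
Definition diag_phase (i : 'I_N) (c : 'I_4) : Defs.C :=
  if [pick j | target j == i] is Some j then expi (theta j (swap2 c)) else 1.

Lemma diag_phase_unit i c : diag_phase i c * conjc (diag_phase i c) = 1.
Proof. by rewrite /diag_phase; case: pickP => [j _|_]; rewrite ?mul_expi_conjc ?conjc1 ?mulr1. Qed.

Definition diag_layer : mlayer N :=
  @MLayer N diag_pair (swap_imagesK target_inj (@rshift_inj _ _) target_neq_ancilla)
    diag_phase diag_phase_unit (fun _ => id) (fun _ => @inj_id _).

Lemma diag_layer_map x : mlayer_map diag_layer x = x.
Proof. by apply/ffunP => k; rewrite ffunE /=; do !case: ifP => _; rewrite ?fst2_idx2 ?snd2_idx2. Qed.

Lemma diag_pair_lt (i : 'I_N) : (i < diag_pair i)%N = (i \in target @: [set: 'I_n]).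
Proof.
case: (pickP (fun j => target j == i)) => [j /eqP <-|t_out].
  by rewrite (swap_images_f _ target_inj) target_lt_ancilla imset_f ?inE.
apply/idP/imsetP => [|[j _ ej]]; last by have := t_out j; rewrite ej eqxx.
case: (pickP (fun j => ancilla j == i)) => [j /eqP <-|a_out].
  by rewrite (swap_images_g (@rshift_inj _ _) target_neq_ancilla) ltnNge ltnW ?target_lt_ancilla.
by rewrite swap_images_out ?ltnn // => j; rewrite ?t_out ?a_out.
Qed.

Lemma diag_layer_phase x : mlayer_phase diag_layer x =
  \prod_(j < n) expi (theta j (idx2 (x (ancilla j)) (x (target j)))).
Proof.
rewrite /mlayer_phase /= (eq_bigl _ _ diag_pair_lt) big_imset /=; last by move=> ? ? _ _; apply: target_inj.
apply: eq_big => [j|j _]; first by rewrite in_setT.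
by rewrite (swap_images_f _ target_inj) /diag_phase pick_inj /swap2 ?fst2_idx2 ?snd2_idx2 //; exact: target_inj.
Qed.

End DiagonalLayer.

Section PhaseCircuit.
Variables (n : nat) (q : 'I_n.+1) (t : 'I_n -> 'I_n.+1) (theta : 'I_n -> 'I_4 -> R).
Hypotheses (t_inj : injective t) (t_neq_q : forall i, t i != q).
Local Notation N := (n.+1 + n).

Definition fanout_diag_layers r : seq (mlayer N) :=
  map (@cnot_layer N) (fanout n q r) ++
  diag_layer theta t_inj :: map (@cnot_layer N) (rev (fanout n q r)).

Lemma size_fanout_diag_layers r : size (fanout_diag_layers r) = (2 * r + 3)%N.
Proof. by rewrite size_cat /= !size_map size_rev /= size_map size_iota; lia. Qed.

Lemma fanout_diag_layers_map r x : circuit_map (fanout_diag_layers r) x = x.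
Proof.
rewrite /circuit_map foldl_cat /= -!/(circuit_map _ _) diag_layer_map.
exact: circuit_map_cnot_rev.
Qed.

Lemma fanout_diag_layers_phase r x : anc_part x = [ffun=> false] -> (n <= 2 ^ r)%N ->
  circuit_phase (fanout_diag_layers r) x =
  \prod_(j < n) expi (theta j (idx2 (x (lshift n q)) (x (target t j)))).
Proof.
move=> x_anc n_le; rewrite circuit_phase_cat circuit_phase_cnot mul1r fanout_map //=.
rewrite circuit_phase_cnot mulr1 diag_layer_phase.
apply: eq_bigr => j _; rewrite !ffunE /= ltn_ord ltnNge leq_addr /=.
by rewrite ltn_add2l (leq_trans _ n_le).
Qed.

Lemma embeds_fanout_diag_layers r : (n <= 2 ^ r)%N ->
  embeds (\big[@opmul n.+1/@opid n.+1]_(i < n)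
            two_qubit_on q (t (rev_ord i)) (diag_gate (theta (rev_ord i))))
         (circuit (fanout_diag_layers r)).
Proof.
move=> n_le; apply: embeds_diagonal.
- by apply: big_opmul_diagonal => i; apply: two_qubit_on_diag; rewrite eq_sym.
- by move=> x y; rewrite circuit_monomial /monomial fanout_diag_layers_map.
move=> x x_anc; rewrite fanout_diag_layers_phase // (reindex_inj rev_ord_inj) /=.
by apply: eq_bigr => j _; rewrite !ffunE.
Qed.

End PhaseCircuit.

Local Close Scope ring_scope.
Local Open Scope R_scope.

Lemma ln_le x y : 0 < x -> x <= y -> ln x <= ln y.
Proof.
move=> x_pos le_xy; case: (Rle_lt_or_eq_dec _ _ le_xy) => [lt_xy|<-].
  exact/Rlt_le/ln_increasing.
exact: Rle_refl.
Qed.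

Lemma INR_exp2 r : INR (2 ^ r) = 2 ^ r.
Proof. by elim: r => //= r IH; rewrite expnS -multE mult_INR IH. Qed.

Lemma depth_bound n r : (2 <= n)%N -> (2 ^ r <= n)%N -> INR (2 * r + 5) <= 14 * ln (INR n).
Proof.
move=> /ssrnat.leP /le_INR n_ge2 /ssrnat.leP /le_INR; rewrite INR_exp2 => pow_le.
have ln2_gt := ln_lt_2.
have ln2_le : ln 2 <= ln (INR n) by apply: ln_le; [lra|exact: n_ge2].
have r_le : INR r * ln 2 <= ln (INR n).
  by rewrite -ln_pow; [apply: ln_le; [apply: pow_lt|]|]; lra.
(* [ln 2 > 1/2] gives [r <= 2 ln n] and [1 <= 2 ln n]. *)
have := pos_INR r.
rewrite -multE -plusE plus_INR mult_INR [INR 2]INR_IZR_INZ [INR 5]INR_IZR_INZ /=; nra.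
Qed.

Theorem proposition3 :
  exists c : R, (0 < c)%R /\
  forall n : nat, (2 <= n)%N ->
  forall (q : 'I_n.+1) (t : 'I_n -> 'I_n.+1),
    injective t -> (forall i, t i != q) ->
  forall theta : 'I_n -> 'I_4 -> R,
    let D := fun i : 'I_n => two_qubit_on q (t i) (diag_gate (theta i)) in
    (* D_n D_{n-1} ... D_1 *)
    let F := \big[@opmul n.+1/@opid n.+1]_(i < n) D (rev_ord i) in
    exists (m : nat) (M : op (n.+1 + m)),
      (INR m <= c * INR n)%R /\
      (exists k : nat, (INR k <= c * ln (INR n))%R /\ depth_circuit k M) /\
      embeds F M.
Proof.
exists 14; split=> [|n n_ge2 q t t_inj t_neq_q theta D F]; first by apply/RltP; rewrite -R0E; lra.
pose r := trunc_log 2 n.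
have pow_le : (2 ^ r <= n)%N by apply: trunc_logP; lia.
have n_le : (n <= 2 ^ r.+1)%N by apply/ltnW/trunc_log_ltn.
exists n, (circuit (fanout_diag_layers q theta t_inj r.+1)); split; [|split].
- by apply/RleP; rewrite -RmultE; have := pos_INR n; lra.
- exists (2 * r + 5)%N; split; first by apply/RleP; rewrite -RmultE; exact: depth_bound.
  have <- : size (fanout_diag_layers q theta t_inj r.+1) = (2 * r + 5)%N.
    by rewrite size_fanout_diag_layers; lia.
  exact: depth_circuit_size.
- exact: embeds_fanout_diag_layers.
Qed.
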